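(* Let $n>1$ be an integer and $\lambda>1$. Let $G=BS(1,n)=\langle a,b\mid ba=a^nb\rangle$ and let $\Phi:G\times\mathbb R^2\to\mathbb R^2$ be the linear action determined by $f_a(x)=Ax$, $f_b(x)=Bx$, where $A=\begin{pmatrix}1&0\\1&1\end{pmatrix}$ and $B=\begin{pmatrix}\lambda&0\\0&n\lambda\end{pmatrix}$ (this is well defined since $BA=A^nB$), and $\mathbb R^2$ carries the Euclidean metric. Then: (i) if $\lambda\in(1,n]$, the action $\Phi$ does not have the shadowing property; (ii) if $\lambda>n$, the action $\Phi$ has the shadowing property.
   Context: An action of a group $G$ on a metric space $(\Omega,\mathrm{dist})$ is a map $\Phi:G\times\Omega\to\Omega$ such that each $f_g=\Phi(g,\cdot)$ is a homeomorphism, $\Phi(e,x)=x$, and $\Phi(g_1g_2,x)=\Phi(g_1,\Phi(g_2,x))$. Fix a finite symmetric generating set $S$ of $G$ (e.g. $S=\{a,b,a^{-1},b^{-1}\}$; the property below does not depend on this choice). For $d>0$, a family $\{y_g\}_{g\in G}\subset\Omega$ is a $d$-pseudotrajectory if $\mathrm{dist}(y_{sg},f_s(y_g))<d$ for all $s\in S$, $g\in G$. The action has the shadowing property if for every $\varepsilon>0$ there is $d>0$ such that for every $d$-pseudotrajectory $\{y_g\}_{g\in G}$ there is $x_e\in\Omega$ with $\mathrm{dist}(y_g,f_g(x_e))<\varepsilon$ for all $g\in G$. *)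

From Stdlib Require Import Reals.
Open Scope R_scope.

Record Group := {
  carrier :> Type;
  gmul : carrier -> carrier -> carrier;
  ginv : carrier -> carrier;
  gone : carrier;
  gmul_assoc : forall x y z, gmul x (gmul y z) = gmul (gmul x y) z;
  gmul_1l : forall x, gmul gone x = x;
  gmul_1r : forall x, gmul x gone = x;
  gmul_Vl : forall x, gmul (ginv x) x = gone;
  gmul_Vr : forall x, gmul x (ginv x) = gone
}.

Arguments gmul {_} _ _.
Arguments ginv {_} _.
Arguments gone {_}.

Fixpoint gpow {G : Group} (x : G) (k : nat) : G :=
  match k with O => gone | S k' => gmul x (gpow x k') end.

Definition is_hom {G H : Group} (f : G -> H) : Prop :=
  forall x y, f (gmul x y) = gmul (f x) (f y).

Inductive generated {G : Group} (a b : G) : G -> Prop :=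
| gen_one : generated a b gone
| gen_step : forall s g, (s = a \/ s = b \/ s = ginv a \/ s = ginv b) ->
    generated a b g -> generated a b (gmul s g).

(** (G, a, b) is a presentation of BS(1,n) = < a, b | b a = a^n b >:
    G is generated by a, b, the relation holds, and G has the universal
    property of the presented group. *)
Definition is_BS1n (G : Group) (n : nat) (a b : G) : Prop :=
  (forall g : G, generated a b g) /\
  gmul b a = gmul (gpow a n) b /\
  (forall (H : Group) (h1 h2 : H), gmul h2 h1 = gmul (gpow h1 n) h2 ->
     exists f : G -> H, is_hom f /\ f a = h1 /\ f b = h2).

Definition dist2 (x y : R * R) : R :=
  sqrt ((fst x - fst y) ^ 2 + (snd x - snd y) ^ 2).

Definition continuous2 (f : R * R -> R * R) : Prop :=
  forall x eps, 0 < eps -> exists del, 0 < del /\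
    forall y, dist2 x y < del -> dist2 (f x) (f y) < eps.

(** An action of G on R^2 by homeomorphisms (continuity of each f_g together
    with the action axioms makes f_g a homeomorphism, with inverse f_{g^-1}). *)
Definition is_action (G : Group) (Phi : G -> R * R -> R * R) : Prop :=
  (forall g, continuous2 (Phi g)) /\
  (forall x, Phi gone x = x) /\
  (forall g1 g2 x, Phi (gmul g1 g2) x = Phi g1 (Phi g2 x)).

Definition in_S {G : Group} (a b s : G) : Prop :=
  s = a \/ s = b \/ s = ginv a \/ s = ginv b.

Definition pseudotrajectory {G : Group} (a b : G) (Phi : G -> R * R -> R * R)
  (d : R) (y : G -> R * R) : Prop :=
  forall s g, in_S a b s -> dist2 (y (gmul s g)) (Phi s (y g)) < d.

Definition shadowing {G : Group} (a b : G) (Phi : G -> R * R -> R * R) : Prop :=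
  forall eps, 0 < eps -> exists d, 0 < d /\
    forall y : G -> R * R, pseudotrajectory a b Phi d y ->
      exists x, forall g, dist2 (y g) (Phi g x) < eps.

Definition matA (x : R * R) : R * R := (fst x, fst x + snd x).
Definition matB (n : nat) (lam : R) (x : R * R) : R * R :=
  (lam * fst x, INR n * lam * snd x).

From Stdlib Require Import Reals Lra Lia.
Open Scope R_scope.

(** (ii) lam > n.  Given a d-pseudotrajectory y, pull it back along the
    b-orbit: the limits  lim_k lam^-k y1(b^k g)  and  lim_k (n lam)^-k y2(b^k g)
    exist (geometric Cauchy sequences) and are within d/(lam-1) of y(g).  They
    intertwine b with B exactly, and also a with A: since b^k a = a^(n^k) b^k,
    the a-step costs n^k d (resp. n^(2k) d) along the orbit, which the
    rescaling kills because n/lam < 1.  An equivariant map is an orbit of the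
    action, so y is shadowed by the orbit of its limit point at 1.

    (i) lam <= n.  BS(1,n) maps onto the explicit group Z x R with
    (h,s)(h',s') = (h+h', s n^-h' + s').  On it, (h,s) |-> kap (lam^h r(s),
    (n lam)^h R(s)), with r a ramp and R its primitive, is an exact B-orbit
    and an approximate A-orbit (this is where lam <= n is used), so it gives a
    3 kap-pseudotrajectory for every kap > 0.  Its first coordinate is 0 at b^k
    and kap lam^k at a^(n^k) b^k, while every true orbit has the same first
    coordinate at both points: no orbit 1-shadows it. *)

Lemma Rabs_le_between x e : Rabs x <= e -> - e <= x <= e.
Proof. unfold Rabs. destruct (Rcase_abs x); lra. Qed.

Lemma dist2_nonneg x y : 0 <= dist2 x y.
Proof. apply sqrt_pos. Qed.

Lemma dist2_fst x y : Rabs (fst x - fst y) <= dist2 x y.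
Proof.
  unfold dist2. rewrite <- sqrt_Rsqr_abs. apply sqrt_le_1_alt.
  unfold Rsqr. pose proof (pow2_ge_0 (snd x - snd y)). lra.
Qed.

Lemma dist2_snd x y : Rabs (snd x - snd y) <= dist2 x y.
Proof.
  unfold dist2. rewrite <- sqrt_Rsqr_abs. apply sqrt_le_1_alt.
  unfold Rsqr. pose proof (pow2_ge_0 (fst x - fst y)). lra.
Qed.

Lemma dist2_lt_of_coords x y e1 e2 e :
  Rabs (fst x - fst y) <= e1 -> Rabs (snd x - snd y) <= e2 ->
  e1 * e1 + e2 * e2 < e * e -> 0 < e -> dist2 x y < e.
Proof.
  intros H1 H2 He Hpos. unfold dist2. rewrite <- (sqrt_pow2 e) by lra.
  apply sqrt_lt_1_alt.
  rewrite <- (pow2_abs (fst x - fst y)), <- (pow2_abs (snd x - snd y)).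
  pose proof (Rabs_pos (fst x - fst y)). pose proof (Rabs_pos (snd x - snd y)).
  split; nra.
Qed.

Lemma gpow_succ_r (G : Group) (x : G) k : gpow x (S k) = gmul (gpow x k) x.
Proof.
  induction k as [|k IH]; simpl in *.
  - now rewrite gmul_1l, gmul_1r.
  - now rewrite <- gmul_assoc, <- IH.
Qed.

Lemma gpow_add (G : Group) (x : G) p q : gpow x (p + q) = gmul (gpow x p) (gpow x q).
Proof.
  induction p as [|p IH]; simpl.
  - now rewrite gmul_1l.
  - now rewrite IH, gmul_assoc.
Qed.

Lemma bs_conj_pow (G : Group) (n : nat) (a b : G) :
  gmul b a = gmul (gpow a n) b -> forall m, gmul b (gpow a m) = gmul (gpow a (n * m)) b.
Proof.
  intros Hrel m. induction m as [|m IH]; simpl.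
  - rewrite Nat.mul_0_r; simpl. now rewrite gmul_1l, gmul_1r.
  - rewrite gmul_assoc, Hrel, <- gmul_assoc, IH, gmul_assoc, <- gpow_add.
    now replace (n + n * m)%nat with (n * S m)%nat by lia.
Qed.

Lemma bs_pow_conj (G : Group) (n : nat) (a b : G) :
  gmul b a = gmul (gpow a n) b -> forall k, gmul (gpow b k) a = gmul (gpow a (n ^ k)) (gpow b k).
Proof.
  intros Hrel k. induction k as [|k IH]; simpl.
  - now rewrite gmul_1l, !gmul_1r.
  - rewrite <- gmul_assoc, IH, gmul_assoc, (bs_conj_pow G n a b Hrel), <- gmul_assoc.
    reflexivity.
Qed.

Lemma hom_one (G H : Group) (f : G -> H) : is_hom f -> f gone = gone.
Proof.
  intros Hf. assert (E : gmul (f gone) (f gone) = f gone) by now rewrite <- Hf, gmul_1l.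
  transitivity (gmul (ginv (f gone)) (gmul (f gone) (f gone))).
  - now rewrite gmul_assoc, gmul_Vl, gmul_1l.
  - now rewrite E, gmul_Vl.
Qed.

Lemma hom_inv (G H : Group) (f : G -> H) : is_hom f -> forall x, f (ginv x) = ginv (f x).
Proof.
  intros Hf x.
  rewrite <- (gmul_1r H (f (ginv x))), <- (gmul_Vr H (f x)), gmul_assoc, <- Hf,
    gmul_Vl, (hom_one G H f Hf), gmul_1l.
  reflexivity.
Qed.

Lemma hom_pow (G H : Group) (f : G -> H) : is_hom f -> forall x k, f (gpow x k) = gpow (f x) k.
Proof.
  intros Hf x k. induction k as [|k IH]; simpl.
  - exact (hom_one G H f Hf).
  - now rewrite Hf, IH.
Qed.

Lemma action_inv_apply (G : Group) (X : Type) (Phi : G -> X -> X) :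
  (forall x, Phi gone x = x) -> (forall g1 g2 x, Phi (gmul g1 g2) x = Phi g1 (Phi g2 x)) ->
  forall s v w, Phi s w = v -> Phi (ginv s) v = w.
Proof.
  intros Hone Hmul s v w <-. now rewrite <- Hmul, gmul_Vl, Hone.
Qed.

Lemma equivariant_inv (G : Group) (X : Type) (Phi : G -> X -> X) (W : G -> X) s :
  (forall x, Phi gone x = x) -> (forall g1 g2 x, Phi (gmul g1 g2) x = Phi g1 (Phi g2 x)) ->
  (forall g, W (gmul s g) = Phi s (W g)) ->
  forall g, W (gmul (ginv s) g) = Phi (ginv s) (W g).
Proof.
  intros Hone Hmul Ws g. symmetry. apply (action_inv_apply G X Phi Hone Hmul).
  now rewrite <- Ws, gmul_assoc, gmul_Vr, gmul_1l.
Qed.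

Lemma equivariant_is_orbit (G : Group) (a b : G) (X : Type) (Phi : G -> X -> X)
  (W : G -> X) :
  (forall x, Phi gone x = x) -> (forall g1 g2 x, Phi (gmul g1 g2) x = Phi g1 (Phi g2 x)) ->
  (forall g, W (gmul a g) = Phi a (W g)) -> (forall g, W (gmul b g) = Phi b (W g)) ->
  forall g, generated a b g -> W g = Phi g (W gone).
Proof.
  intros Hone Hmul Wa Wb g Hg. induction Hg as [|s g Hs _ IH].
  - now rewrite Hone.
  - rewrite Hmul, <- IH.
    destruct Hs as [-> | [-> | [-> | ->]]]; auto; now apply equivariant_inv.
Qed.

Lemma geometric_tail (v : nat -> R) C r : 0 <= C -> 0 <= r < 1 ->
  (forall k, Rabs (v (S k) - v k) <= C * r ^ k) ->
  forall k j, Rabs (v (k + j)%nat - v k) <= C * r ^ k / (1 - r).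
Proof.
  intros HC Hr Hv k j.
  assert (Hsum : Rabs (v (k + j)%nat - v k) <= C * r ^ k * (1 - r ^ j) / (1 - r)).
  { induction j as [|j IH].
    - rewrite Nat.add_0_r, Rminus_diag, Rabs_R0. simpl. unfold Rdiv. lra.
    - rewrite Nat.add_succ_r.
      replace (v (S (k + j)) - v k) with ((v (S (k + j)) - v (k + j)%nat) + (v (k + j)%nat - v k))
        by ring.
      eapply Rle_trans; [apply Rabs_triang|].
      pose proof (Hv (k + j)%nat) as Hkj. rewrite pow_add in Hkj.
      replace (C * r ^ k * (1 - r ^ S j) / (1 - r))
        with (C * (r ^ k * r ^ j) + C * r ^ k * (1 - r ^ j) / (1 - r)) by (simpl; field; lra).
      lra. }
  eapply Rle_trans; [exact Hsum|]. unfold Rdiv.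
  apply Rmult_le_compat_r; [left; apply Rinv_0_lt_compat; lra|].
  pose proof (pow_le r k (proj1 Hr)). pose proof (pow_le r j (proj1 Hr)).
  pose proof (Rmult_le_pos C (r ^ k) HC (pow_le r k (proj1 Hr))). nra.
Qed.

Lemma geometric_limit (v : nat -> R) C r : 0 <= C -> 0 <= r < 1 ->
  (forall k, Rabs (v (S k) - v k) <= C * r ^ k) ->
  {l | Un_cv v l /\ Rabs (l - v O) <= C / (1 - r)}.
Proof.
  intros HC Hr Hv. pose proof (geometric_tail v C r HC Hr Hv) as Htail.
  assert (Hfar : forall k m, (k <= m)%nat -> Rabs (v m - v k) <= C * r ^ k / (1 - r)).
  { intros k m Hkm. replace m with (k + (m - k))%nat by lia. apply Htail. }
  destruct (R_complete v) as [l Hl].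
  - intros eps Heps.
    destruct (pow_lt_1_zero r ltac:(rewrite Rabs_pos_eq; lra) (eps * (1 - r) / (2 * (C + 1))))
      as [N HN].
    { apply Rdiv_lt_0_compat; nra. }
    exists N. intros p q Hp Hq. unfold Rdist.
    pose proof (HN N (le_n N)) as HrN. rewrite Rabs_pos_eq in HrN by (apply pow_le; lra).
    assert (Hsmall : C * r ^ N / (1 - r) < eps / 2).
    { apply (Rmult_lt_reg_r (1 - r)); [lra|]. unfold Rdiv.
      rewrite Rmult_assoc, Rinv_l by lra.
      apply (Rmult_lt_compat_r (C + 1)) in HrN; [|lra].
      replace (eps * (1 - r) / (2 * (C + 1)) * (C + 1)) with (eps * (1 - r) / 2) in HrN
        by (field; lra).
      pose proof (pow_le r N (proj1 Hr)). nra. }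
    replace (v p - v q) with ((v p - v N) - (v q - v N)) by ring.
    eapply Rle_lt_trans; [apply Rabs_triang|]. rewrite Rabs_Ropp.
    pose proof (Hfar N p Hp). pose proof (Hfar N q Hq). lra.
  - exists l. split; [exact Hl|].
    apply (@Rle_cv_lim (fun m => Rabs (v m - v O)) (fun _ => C / (1 - r))).
    + intros m. pose proof (Hfar O m (Nat.le_0_l m)) as H0. simpl in H0. lra.
    + apply cv_cvabs, CV_minus; [exact Hl|]. intros eps Heps. exists O. intros.
      unfold Rdist. rewrite Rminus_diag, Rabs_R0. lra.
    + intros eps Heps. exists O. intros. unfold Rdist. rewrite Rminus_diag, Rabs_R0. lra.
Qed.

Lemma rescaled_limit (u : nat -> R) c d : 1 < c -> 0 <= d ->
  (forall k, Rabs (u (S k) - c * u k) <= d) ->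
  {l | Un_cv (fun k => u k / c ^ k) l /\ Rabs (l - u O) <= d / (c - 1)}.
Proof.
  intros Hc Hd Hu.
  assert (Hinc : forall k, Rabs (u (S k) / c ^ S k - u k / c ^ k) <= d / c * (/ c) ^ k).
  { intros k. pose proof (pow_lt c k ltac:(lra)) as Hck.
    replace (u (S k) / c ^ S k - u k / c ^ k) with ((u (S k) - c * u k) * (/ c * (/ c) ^ k))
      by (rewrite pow_inv; simpl; field; lra).
    rewrite Rabs_mult, (Rabs_pos_eq (/ c * _))
      by (apply Rmult_le_pos; [|apply pow_le]; left; apply Rinv_0_lt_compat; lra).
    replace (d / c * (/ c) ^ k) with (d * (/ c * (/ c) ^ k)) by (field; lra).
    apply Rmult_le_compat_r; [|apply Hu].
    apply Rmult_le_pos; [|apply pow_le]; left; apply Rinv_0_lt_compat; lra. }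
  assert (Hr : 0 <= / c < 1).
  { split; [left; apply Rinv_0_lt_compat; lra|]. rewrite <- Rinv_1. apply Rinv_lt_contravar; lra. }
  assert (Hdc : 0 <= d / c)
    by (unfold Rdiv; apply Rmult_le_pos; [lra | left; apply Rinv_0_lt_compat; lra]).
  destruct (geometric_limit (fun k => u k / c ^ k) (d / c) (/ c) Hdc Hr Hinc) as [l [Hl Hl0]].
  exists l. split; [exact Hl|].
  simpl in Hl0. replace (u O / 1) with (u O) in Hl0 by field.
  replace (d / c / (1 - / c)) with (d / (c - 1)) in Hl0 by (field; lra). exact Hl0.
Qed.

Lemma cv_geometric_perturbation (u v : nat -> R) l D r : 0 <= r < 1 ->
  Un_cv u l -> (forall k, Rabs (v k - u k) <= D * r ^ k) -> Un_cv v l.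
Proof.
  intros Hr Hu Hvu eps Heps.
  destruct (Hu (eps / 2) ltac:(lra)) as [N1 HN1].
  destruct (pow_lt_1_zero r ltac:(rewrite Rabs_pos_eq; lra) (eps / 2 / (Rabs D + 1)))
    as [N2 HN2].
  { apply Rdiv_lt_0_compat; [lra|]. pose proof (Rabs_pos D). lra. }
  exists (Nat.max N1 N2). intros k Hk. unfold Rdist in *.
  specialize (HN1 k ltac:(lia)). specialize (HN2 k ltac:(lia)).
  rewrite Rabs_pos_eq in HN2 by (apply pow_le; lra).
  pose proof (Hvu k) as Hk'. pose proof (Rabs_pos D). pose proof (pow_le r k (proj1 Hr)).
  assert (Hsmall : D * r ^ k <= eps / 2).
  { apply (Rmult_lt_compat_l (Rabs D + 1)) in HN2; [|lra].
    replace ((Rabs D + 1) * (eps / 2 / (Rabs D + 1))) with (eps / 2) in HN2 by (field; lra).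
    pose proof (Rle_abs D). nra. }
  replace (v k - l) with ((v k - u k) + (u k - l)) by ring.
  eapply Rle_lt_trans; [apply Rabs_triang|]. lra.
Qed.

Lemma cv_scale (u : nat -> R) l c : Un_cv u l -> Un_cv (fun k => c * u k) (c * l).
Proof.
  intros Hu. apply (CV_mult (fun _ => c)); [|exact Hu].
  intros eps Heps. exists O. intros. unfold Rdist. rewrite Rminus_diag, Rabs_R0. lra.
Qed.

Lemma shear_chain (G : Group) (a : G) (y : G -> R * R) d :
  (forall g, dist2 (y (gmul a g)) (matA (y g)) < d) ->
  forall p j, Rabs (fst (y (gmul (gpow a j) p)) - fst (y p)) <= INR j * d /\
    Rabs (snd (y (gmul (gpow a j) p)) - INR j * fst (y p) - snd (y p)) <= INR j * INR j * d.
Proof.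
  intros Ha p j. pose proof (Rle_lt_trans _ _ _ (dist2_nonneg _ _) (Ha p)) as Hd.
  induction j as [|j [IH1 IH2]].
  - simpl. rewrite gmul_1l. split; apply Rabs_le; lra.
  - simpl gpow. rewrite <- gmul_assoc. set (q := gmul (gpow a j) p) in *.
    pose proof (Rle_lt_trans _ _ _ (dist2_fst _ _) (Ha q)) as E1.
    pose proof (Rle_lt_trans _ _ _ (dist2_snd _ _) (Ha q)) as E2.
    unfold matA in E1, E2; simpl in E1, E2.
    apply Rabs_def2 in E1. apply Rabs_def2 in E2.
    apply Rabs_le_between in IH1. apply Rabs_le_between in IH2.
    rewrite S_INR. pose proof (pos_INR j).
    split; apply Rabs_le; nra.
Qed.

(** * Part (ii): shadowing when [lam > n]

    Given a [d]-pseudotrajectory [y], the candidate shadow of [y g] is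
    [lim_k B^-k y (b^k g)], computed coordinatewise. *)
Section ExpandingCase.

Variables (n : nat) (lam d : R) (G : Group) (a b : G) (y : G -> R * R).
Hypothesis n_pos : (0 < n)%nat.
Hypothesis n_lt_lam : INR n < lam.
Hypothesis rel : gmul b a = gmul (gpow a n) b.
Hypothesis y_a : forall g, dist2 (y (gmul a g)) (matA (y g)) < d.
Hypothesis y_b : forall g, dist2 (y (gmul b g)) (matB n lam (y g)) < d.

Lemma d_pos : 0 < d.
Proof. exact (Rle_lt_trans _ _ _ (dist2_nonneg _ _) (y_a gone)). Qed.

Lemma n_ge1 : 1 <= INR n.
Proof. apply (le_INR 1); lia. Qed.

Lemma lam_gt1 : 1 < lam.
Proof. pose proof n_ge1. lra. Qed.

Lemma nlam_gt1 : 1 < INR n * lam.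
Proof. pose proof n_ge1. pose proof lam_gt1. nra. Qed.

(* The ratio [n / lam < 1] governs how fast the a-steps become negligible. *)
Lemma ratio_bounds : 0 <= INR n / lam < 1.
Proof.
  pose proof lam_gt1. pose proof n_ge1. split.
  - apply Rmult_le_pos; [lra | left; apply Rinv_0_lt_compat; lra].
  - apply (Rmult_lt_reg_r lam); [lra|]. unfold Rdiv. rewrite Rmult_assoc, Rinv_l; lra.
Qed.

Definition orbit_fst (g : G) (k : nat) : R := fst (y (gmul (gpow b k) g)).
Definition orbit_snd (g : G) (k : nat) : R := snd (y (gmul (gpow b k) g)).

Lemma orbit_fst_step g k : Rabs (orbit_fst g (S k) - lam * orbit_fst g k) <= d.
Proof.
  unfold orbit_fst. simpl gpow. rewrite <- gmul_assoc.
  left. exact (Rle_lt_trans _ _ _ (dist2_fst _ _) (y_b _)).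
Qed.

Lemma orbit_snd_step g k : Rabs (orbit_snd g (S k) - INR n * lam * orbit_snd g k) <= d.
Proof.
  unfold orbit_snd. simpl gpow. rewrite <- gmul_assoc.
  left. exact (Rle_lt_trans _ _ _ (dist2_snd _ _) (y_b _)).
Qed.

Definition shadow_fst (g : G) : R :=
  proj1_sig (rescaled_limit (orbit_fst g) lam d lam_gt1 (Rlt_le _ _ d_pos) (orbit_fst_step g)).
Definition shadow_snd (g : G) : R :=
  proj1_sig (rescaled_limit (orbit_snd g) (INR n * lam) d nlam_gt1 (Rlt_le _ _ d_pos)
    (orbit_snd_step g)).

Lemma shadow_fst_spec g :
  Un_cv (fun k => orbit_fst g k / lam ^ k) (shadow_fst g) /\
  Rabs (shadow_fst g - fst (y g)) <= d / (lam - 1).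
Proof.
  unfold shadow_fst. destruct rescaled_limit as [l [Hl Hl0]]. simpl.
  unfold orbit_fst in Hl0. simpl in Hl0. rewrite gmul_1l in Hl0. auto.
Qed.

Lemma shadow_snd_spec g :
  Un_cv (fun k => orbit_snd g k / (INR n * lam) ^ k) (shadow_snd g) /\
  Rabs (shadow_snd g - snd (y g)) <= d / (INR n * lam - 1).
Proof.
  unfold shadow_snd. destruct rescaled_limit as [l [Hl Hl0]]. simpl.
  unfold orbit_snd in Hl0. simpl in Hl0. rewrite gmul_1l in Hl0. auto.
Qed.

Lemma orbit_after_b g k : gmul (gpow b k) (gmul b g) = gmul (gpow b (S k)) g.
Proof. now rewrite gmul_assoc, gpow_succ_r. Qed.

Lemma orbit_after_a g k :
  gmul (gpow b k) (gmul a g) = gmul (gpow a (n ^ k)) (gmul (gpow b k) g).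
Proof. now rewrite gmul_assoc, (bs_pow_conj G n a b rel), gmul_assoc. Qed.

Lemma cv_shift_rescaled (u : nat -> R) c l : 0 < c ->
  Un_cv (fun k => u k / c ^ k) l -> Un_cv (fun k => u (S k) / c ^ k) (c * l).
Proof.
  intros Hc Hu. apply (Un_cv_ext (fun k => c * (u (k + 1)%nat / c ^ (k + 1)))).
  - intros k. rewrite Nat.add_1_r. simpl. field. split; [apply pow_nonzero|]; lra.
  - apply cv_scale, (CV_shift' (fun k => u k / c ^ k)), Hu.
Qed.

Lemma shadow_fst_b g : shadow_fst (gmul b g) = lam * shadow_fst g.
Proof.
  apply (UL_sequence (fun k => orbit_fst (gmul b g) k / lam ^ k)); [apply shadow_fst_spec|].
  apply (Un_cv_ext (fun k => orbit_fst g (S k) / lam ^ k)).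
  - intros k. unfold orbit_fst. now rewrite orbit_after_b.
  - apply cv_shift_rescaled; [pose proof lam_gt1; lra | apply shadow_fst_spec].
Qed.

Lemma shadow_snd_b g : shadow_snd (gmul b g) = INR n * lam * shadow_snd g.
Proof.
  apply (UL_sequence (fun k => orbit_snd (gmul b g) k / (INR n * lam) ^ k));
    [apply shadow_snd_spec|].
  apply (Un_cv_ext (fun k => orbit_snd g (S k) / (INR n * lam) ^ k)).
  - intros k. unfold orbit_snd. now rewrite orbit_after_b.
  - apply cv_shift_rescaled; [pose proof nlam_gt1; lra | apply shadow_snd_spec].
Qed.

(* Along [b^k g], the element [a] becomes [a^(n^k)], whose chain error
   [n^k d] (resp. [n^(2k) d]) is killed by the rescaling [lam^-k]
   (resp. [(n lam)^-k]) since [n < lam]. *)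
Lemma shadow_fst_a g : shadow_fst (gmul a g) = shadow_fst g.
Proof.
  apply (UL_sequence (fun k => orbit_fst (gmul a g) k / lam ^ k)); [apply shadow_fst_spec|].
  apply (cv_geometric_perturbation (fun k => orbit_fst g k / lam ^ k) _ _ d (INR n / lam)
           ratio_bounds); [apply shadow_fst_spec|].
  intros k. pose proof lam_gt1. pose proof (pow_lt lam k ltac:(lra)).
  unfold orbit_fst. rewrite orbit_after_a.
  destruct (shear_chain G a y d y_a (gmul (gpow b k) g) (n ^ k)) as [Hfst _].
  rewrite pow_INR in Hfst.
  replace (fst (y (gmul (gpow a (n ^ k)) (gmul (gpow b k) g))) / lam ^ k
           - fst (y (gmul (gpow b k) g)) / lam ^ k)
    with ((fst (y (gmul (gpow a (n ^ k)) (gmul (gpow b k) g)))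
           - fst (y (gmul (gpow b k) g))) / lam ^ k) by (field; lra).
  unfold Rdiv at 1; rewrite Rabs_mult, Rabs_inv, (Rabs_pos_eq (lam ^ k)) by lra.
  replace (d * (INR n / lam) ^ k) with (INR n ^ k * d / lam ^ k)
    by (unfold Rdiv; rewrite Rpow_mult_distr, pow_inv; ring).
  unfold Rdiv. apply Rmult_le_compat_r; [left; apply Rinv_0_lt_compat|]; lra.
Qed.

Lemma shadow_snd_a g : shadow_snd (gmul a g) = shadow_fst g + shadow_snd g.
Proof.
  apply (UL_sequence (fun k => orbit_snd (gmul a g) k / (INR n * lam) ^ k));
    [apply shadow_snd_spec|].
  apply (cv_geometric_perturbation
           (fun k => orbit_fst g k / lam ^ k + orbit_snd g k / (INR n * lam) ^ k)
           _ _ d (INR n / lam) ratio_bounds).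
  { apply CV_plus; [apply shadow_fst_spec | apply shadow_snd_spec]. }
  intros k. pose proof lam_gt1. pose proof n_ge1.
  pose proof (pow_lt lam k ltac:(lra)). pose proof (pow_lt (INR n) k ltac:(lra)).
  unfold orbit_fst, orbit_snd. rewrite orbit_after_a.
  set (p := gmul (gpow b k) g).
  destruct (shear_chain G a y d y_a p (n ^ k)) as [_ Hsnd].
  rewrite pow_INR in Hsnd.
  replace (snd (y (gmul (gpow a (n ^ k)) p)) / (INR n * lam) ^ k
           - (fst (y p) / lam ^ k + snd (y p) / (INR n * lam) ^ k))
    with ((snd (y (gmul (gpow a (n ^ k)) p)) - INR n ^ k * fst (y p) - snd (y p))
          / (INR n ^ k * lam ^ k))
    by (rewrite Rpow_mult_distr; field; lra).
  unfold Rdiv at 1; rewrite Rabs_mult, Rabs_inv, (Rabs_pos_eq (INR n ^ k * lam ^ k)) by nra.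
  replace (d * (INR n / lam) ^ k) with (INR n ^ k * INR n ^ k * d / (INR n ^ k * lam ^ k))
    by (unfold Rdiv; rewrite Rpow_mult_distr, pow_inv; field; lra).
  unfold Rdiv. apply Rmult_le_compat_r; [left; apply Rinv_0_lt_compat; nra|]. exact Hsnd.
Qed.

Definition shadow_point (g : G) : R * R := (shadow_fst g, shadow_snd g).

Lemma shadow_point_a g : shadow_point (gmul a g) = matA (shadow_point g).
Proof. unfold shadow_point, matA. simpl. now rewrite shadow_fst_a, shadow_snd_a. Qed.

Lemma shadow_point_b g : shadow_point (gmul b g) = matB n lam (shadow_point g).
Proof. unfold shadow_point, matB. simpl. now rewrite shadow_fst_b, shadow_snd_b. Qed.

Lemma shadow_point_close g : dist2 (y g) (shadow_point g) < 2 * d / (lam - 1).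
Proof.
  pose proof lam_gt1. pose proof n_ge1. pose proof d_pos.
  destruct (shadow_fst_spec g) as [_ Hfst]. destruct (shadow_snd_spec g) as [_ Hsnd].
  assert (Hsnd' : d / (INR n * lam - 1) <= d / (lam - 1)).
  { unfold Rdiv. apply Rmult_le_compat_l; [lra|]. apply Rinv_le_contravar; nra. }
  assert (He : 0 < d / (lam - 1)) by (apply Rdiv_lt_0_compat; lra).
  apply (dist2_lt_of_coords _ _ (d / (lam - 1)) (d / (lam - 1))).
  - unfold shadow_point. simpl. rewrite Rabs_minus_sym. exact Hfst.
  - unfold shadow_point. simpl. rewrite Rabs_minus_sym. lra.
  - replace (2 * d / (lam - 1)) with (2 * (d / (lam - 1))) by (field; lra). nra.
  - replace (2 * d / (lam - 1)) with (2 * (d / (lam - 1))) by (field; lra). lra.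
Qed.

End ExpandingCase.

Lemma shadowing_when_expanding (n : nat) (lam : R) (G : Group) (a b : G)
  (Phi : G -> R * R -> R * R) :
  (0 < n)%nat -> INR n < lam ->
  (forall g, generated a b g) -> gmul b a = gmul (gpow a n) b ->
  is_action G Phi -> (forall x, Phi a x = matA x) -> (forall x, Phi b x = matB n lam x) ->
  shadowing a b Phi.
Proof.
  intros Hn Hlam Hgen Hrel [_ [Hone Hmul]] HPa HPb eps Heps.
  assert (Hlam1 : 1 < lam) by (pose proof (le_INR 1 n ltac:(lia)); simpl in *; lra).
  exists (eps * (lam - 1) / 2). split; [apply Rdiv_lt_0_compat; nra|].
  intros y Hy.
  assert (y_a : forall g, dist2 (y (gmul a g)) (matA (y g)) < eps * (lam - 1) / 2).
  { intros g. rewrite <- HPa. apply Hy. left. reflexivity. }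
  assert (y_b : forall g, dist2 (y (gmul b g)) (matB n lam (y g)) < eps * (lam - 1) / 2).
  { intros g. rewrite <- HPb. apply Hy. right. left. reflexivity. }
  set (W := shadow_point n lam _ G a b y Hn Hlam y_a y_b).
  assert (HW : forall g, W g = Phi g (W gone)).
  { intros g. apply (equivariant_is_orbit G a b (R * R) Phi W Hone Hmul).
    - intros h. rewrite HPa. now apply shadow_point_a.
    - intros h. rewrite HPb. now apply shadow_point_b.
    - apply Hgen. }
  exists (W gone). intros g. rewrite <- HW.
  eapply Rlt_le_trans; [apply shadow_point_close|]. right. field. lra.
Qed.

(** * Part (i): no shadowing when [lam <= n] *)

(* A ramp [0 -> 1] on [[0,1]] and its primitive; the second coordinate of the
   bad pseudotrajectory follows the primitive, so that the shear [A] is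
   approximately respected. *)
Definition ramp (s : R) : R :=
  if Rle_dec s 0 then 0 else if Rle_dec s 1 then s else 1.
Definition ramp_primitive (s : R) : R :=
  if Rle_dec s 0 then 0 else if Rle_dec s 1 then s * s / 2 else s - 1 / 2.

Lemma ramp_range s : 0 <= ramp s <= 1.
Proof. unfold ramp; repeat destruct Rle_dec; lra. Qed.

Lemma ramp_lipschitz s t : Rabs (ramp t - ramp s) <= Rabs (t - s).
Proof. unfold ramp; repeat destruct Rle_dec; unfold Rabs; repeat destruct Rcase_abs; lra. Qed.

Lemma ramp_primitive_lipschitz s t : Rabs (ramp_primitive t - ramp_primitive s) <= Rabs (t - s).
Proof.
  unfold ramp_primitive; repeat destruct Rle_dec; unfold Rabs; repeat destruct Rcase_abs; nra.
Qed.

(* First-order Taylor estimate: [ramp] is the derivative of [ramp_primitive]. *)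
Lemma ramp_primitive_taylor s t :
  Rabs (ramp_primitive t - ramp_primitive s - (t - s) * ramp s) <= (t - s) * (t - s).
Proof.
  pose proof (pow2_ge_0 (t - s)). pose proof (pow2_ge_0 (t - 1)). pose proof (pow2_ge_0 (s - 1)).
  pose proof (pow2_ge_0 t). pose proof (pow2_ge_0 s).
  unfold ramp_primitive, ramp; repeat destruct Rle_dec; apply Rabs_le; split; nra.
Qed.

Lemma ramp_increment L Q q s : 0 < L -> 0 < Q -> (L <= Q \/ L <= 1) -> Rabs q * Q = 1 ->
  Rabs (L * (ramp (s + q) - ramp s)) <= 1 /\
  Rabs (Q * L * (ramp_primitive (s + q) - ramp_primitive s) - Q * q * L * ramp s) <= 2.
Proof.
  intros HL HQ Hcase Hq.
  pose proof (ramp_lipschitz s (s + q)) as P1.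
  pose proof (ramp_primitive_lipschitz s (s + q)) as P2.
  pose proof (ramp_primitive_taylor s (s + q)) as P3.
  replace (s + q - s) with q in P1, P2, P3 by ring.
  pose proof (ramp_range s). pose proof (ramp_range (s + q)). pose proof (Rabs_pos q).
  assert (HLq : Q * L * Rabs q = L) by (transitivity (Rabs q * Q * L); [ring | rewrite Hq; ring]).
  split.
  - rewrite Rabs_mult, (Rabs_pos_eq L) by lra.
    destruct Hcase as [HLQ | HL1].
    + apply Rle_trans with (L * Rabs q); [apply Rmult_le_compat_l; lra | nra].
    + assert (Rabs (ramp (s + q) - ramp s) <= 1) by (apply Rabs_le; lra). nra.
  - destruct Hcase as [HLQ | HL1].
    + (* second-order cancellation: the error is [Q L q^2 = L |q| <= 1] *)
      replace (Q * L * (ramp_primitive (s + q) - ramp_primitive s) - Q * q * L * ramp s)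
        with (Q * L * (ramp_primitive (s + q) - ramp_primitive s - q * ramp s)) by ring.
      rewrite Rabs_mult, (Rabs_pos_eq (Q * L)) by nra.
      assert (Hqq : q * q = Rabs q * Rabs q) by (rewrite <- Rabs_mult, Rabs_pos_eq; nra).
      apply Rle_trans with (Q * L * (q * q)); [apply Rmult_le_compat_l; nra|].
      rewrite Hqq. nra.
    + (* both terms are bounded by [L] *)
      eapply Rle_trans; [apply Rabs_triang|]. rewrite Rabs_Ropp, !Rabs_mult.
      rewrite (Rabs_pos_eq Q), (Rabs_pos_eq L), (Rabs_pos_eq (ramp s)) by lra.
      assert (Q * L * Rabs (ramp_primitive (s + q) - ramp_primitive s) <= L).
      { rewrite <- HLq at 2. apply Rmult_le_compat_l; nra. }
      replace (Q * Rabs q) with 1 by lra. nra.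
Qed.

Lemma powerRZ_compare lam N h : 1 < lam -> lam <= N ->
  powerRZ lam h <= powerRZ N h \/ powerRZ lam h <= 1.
Proof.
  intros Hlam HN. destruct h as [|p|p]; simpl.
  - left; lra.
  - left; apply pow_incr; lra.
  - right. pose proof (pow_R1_Rle lam (Pos.to_nat p) ltac:(lra)).
    rewrite <- Rinv_1. apply Rinv_le_contravar; lra.
Qed.

(* A concrete model of BS(1,N): pairs [(h, s)] standing for [b^h a^(s N^h)],
   with [(h, s) (h', s') = (h + h', s N^-h' + s')]. *)
Definition bs_mul (N : R) (x y : Z * R) : Z * R :=
  ((fst x + fst y)%Z, snd x * powerRZ N (- fst y) + snd y).
Definition bs_inv (N : R) (x : Z * R) : Z * R :=
  ((- fst x)%Z, - (snd x * powerRZ N (fst x))).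

Section BSModel.

Variables (N : R) (N_neq0 : N <> 0).

Lemma bs_mul_assoc x y z : bs_mul N x (bs_mul N y z) = bs_mul N (bs_mul N x y) z.
Proof.
  destruct x as [h1 s1], y as [h2 s2], z as [h3 s3]; unfold bs_mul; simpl.
  f_equal; [lia|]. rewrite Z.opp_add_distr, powerRZ_add by exact N_neq0. ring.
Qed.

Lemma bs_mul_1l x : bs_mul N (0%Z, 0) x = x.
Proof. destruct x; unfold bs_mul; simpl. f_equal; ring. Qed.

Lemma bs_mul_1r x : bs_mul N x (0%Z, 0) = x.
Proof. destruct x; unfold bs_mul; simpl. f_equal; [lia | ring]. Qed.

Lemma bs_mul_Vl x : bs_mul N (bs_inv N x) x = (0%Z, 0).
Proof.
  destruct x as [h s]; unfold bs_mul, bs_inv; simpl. f_equal; [lia|].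
  rewrite powerRZ_neg'. field. now apply powerRZ_NOR.
Qed.

Lemma bs_mul_Vr x : bs_mul N x (bs_inv N x) = (0%Z, 0).
Proof.
  destruct x as [h s]; unfold bs_mul, bs_inv; simpl.
  rewrite Z.opp_involutive. f_equal; [lia | ring].
Qed.

Definition BSmodel : Group :=
  {| carrier := Z * R; gmul := bs_mul N; ginv := bs_inv N; gone := (0%Z, 0);
     gmul_assoc := bs_mul_assoc; gmul_1l := bs_mul_1l; gmul_1r := bs_mul_1r;
     gmul_Vl := bs_mul_Vl; gmul_Vr := bs_mul_Vr |}.

Lemma model_shift_a c h t : bs_mul N (0%Z, c) (h, t) = (h, t + c * powerRZ N (- h)).
Proof. unfold bs_mul. simpl. f_equal. ring. Qed.

Lemma model_pow_a m : @gpow BSmodel (0%Z, 1) m = (0%Z, INR m).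
Proof.
  induction m as [|m IH]; [reflexivity|].
  cbn [gpow]. rewrite IH. cbn [gmul BSmodel]. unfold bs_mul. cbn [fst snd].
  rewrite S_INR. f_equal. simpl. ring.
Qed.

Lemma model_pow_b k : @gpow BSmodel (1%Z, 0) k = (Z.of_nat k, 0).
Proof.
  induction k as [|k IH]; [reflexivity|].
  cbn [gpow]. rewrite IH. cbn [gmul BSmodel]. unfold bs_mul. cbn [fst snd].
  f_equal; [lia | ring].
Qed.

End BSModel.

(* It is exactly
   [B]-equivariant, and [A]-equivariant up to [3 kap] because [lam <= n]. *)
Definition bump_orbit (kap lam : R) (n : nat) (p : Z * R) : R * R :=
  (kap * (powerRZ lam (fst p) * ramp (snd p)),
   kap * (powerRZ (INR n * lam) (fst p) * ramp_primitive (snd p))).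

Lemma bump_orbit_b kap lam n h s : 0 < lam -> 0 < INR n ->
  bump_orbit kap lam n ((1 + h)%Z, s) = matB n lam (bump_orbit kap lam n (h, s)).
Proof.
  intros Hlam Hn. unfold bump_orbit, matB. cbn [fst snd].
  rewrite !powerRZ_add by nra. simpl powerRZ. f_equal; ring.
Qed.

Lemma bump_orbit_a kap lam n h s q : 0 < kap -> 1 < lam -> lam <= INR n ->
  Rabs q * powerRZ (INR n) h = 1 ->
  dist2 (bump_orbit kap lam n (h, s + q))
    (let v := bump_orbit kap lam n (h, s) in
     (fst v, snd v + powerRZ (INR n) h * q * fst v)) < 3 * kap.
Proof.
  intros Hkap Hlam HlamN Hq. unfold bump_orbit. cbn [fst snd]. rewrite powerRZ_mult.
  set (L := powerRZ lam h). set (Q := powerRZ (INR n) h).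
  assert (HL : 0 < L) by (apply powerRZ_lt; lra).
  assert (HQ : 0 < Q) by (apply powerRZ_lt; lra).
  destruct (ramp_increment L Q q s HL HQ (powerRZ_compare lam (INR n) h Hlam HlamN) Hq)
    as [H1 H2].
  apply (dist2_lt_of_coords _ _ kap (2 * kap)); cbn [fst snd]; [| | nra | lra].
  - replace (kap * (L * ramp (s + q)) - kap * (L * ramp s))
      with (kap * (L * (ramp (s + q) - ramp s))) by ring.
    rewrite Rabs_mult, Rabs_pos_eq by lra. nra.
  - replace (kap * (Q * L * ramp_primitive (s + q))
             - (kap * (Q * L * ramp_primitive s) + Q * q * (kap * (L * ramp s))))
      with (kap * (Q * L * (ramp_primitive (s + q) - ramp_primitive s) - Q * q * L * ramp s))
      by ring.
    rewrite Rabs_mult, (Rabs_pos_eq kap) by lra. nra.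
Qed.

Lemma INR_neq0 n : (1 < n)%nat -> INR n <> 0.
Proof. intros Hn. pose proof (lt_1_INR n Hn). lra. Qed.

Definition model (n : nat) (Hn : (1 < n)%nat) : Group := BSmodel (INR n) (INR_neq0 n Hn).
Definition model_a n Hn : model n Hn := (0%Z, 1).
Definition model_b n Hn : model n Hn := (1%Z, 0).

Lemma model_relation n Hn :
  gmul (model_b n Hn) (model_a n Hn) = gmul (gpow (model_a n Hn) n) (model_b n Hn).
Proof.
  unfold model_a, model_b, model. rewrite model_pow_a. cbn [gmul BSmodel]. unfold bs_mul.
  cbn [fst snd]. simpl powerRZ. f_equal. field. exact (INR_neq0 n Hn).
Qed.

(* The bad pseudotrajectory on [G], pulled back along a homomorphism [f]
   from [G] to the model sending [a, b] to the model generators. *)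
Section SlowCase.

Variables (n : nat) (lam kap : R) (G : Group) (a b : G) (Phi : G -> R * R -> R * R).
Hypothesis n_gt1 : (1 < n)%nat.
Hypothesis lam_gt1 : 1 < lam.
Hypothesis lam_le_n : lam <= INR n.
Hypothesis kap_pos : 0 < kap.
Hypothesis act_one : forall x, Phi gone x = x.
Hypothesis act_mul : forall g1 g2 x, Phi (gmul g1 g2) x = Phi g1 (Phi g2 x).
Hypothesis Phi_a : forall x, Phi a x = matA x.
Hypothesis Phi_b : forall x, Phi b x = matB n lam x.

Variable f : G -> model n n_gt1.
Hypothesis f_hom : is_hom f.
Hypothesis f_a : f a = model_a n n_gt1.
Hypothesis f_b : f b = model_b n n_gt1.

Definition bad_orbit (g : G) : R * R := bump_orbit kap lam n (f g).

Lemma bad_orbit_b g : bad_orbit (gmul b g) = Phi b (bad_orbit g).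
Proof.
  unfold bad_orbit. rewrite f_hom, f_b, Phi_b. destruct (f g) as [h s].
  unfold model_b. cbn [gmul model BSmodel]. unfold bs_mul. cbn [fst snd].
  rewrite Rmult_0_l, Rplus_0_l.
  apply bump_orbit_b; pose proof (lt_1_INR n n_gt1); lra.
Qed.

Lemma bad_orbit_shear e c g : f e = (0%Z, c) -> Rabs c = 1 ->
  dist2 (bad_orbit (gmul e g)) (let v := bad_orbit g in (fst v, snd v + c * fst v))
  < 3 * kap.
Proof.
  intros Hfe Hc. pose proof (lt_1_INR n n_gt1).
  unfold bad_orbit. rewrite f_hom, Hfe. destruct (f g) as [h t].
  cbn [gmul model BSmodel]. rewrite model_shift_a.
  assert (Hpow : powerRZ (INR n) h * powerRZ (INR n) (- h) = 1).
  { rewrite powerRZ_neg'. field. apply powerRZ_NOR; lra. }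
  assert (HNh : 0 < powerRZ (INR n) (- h)) by (apply powerRZ_lt; lra).
  replace c with (powerRZ (INR n) h * (c * powerRZ (INR n) (- h))) at 2
    by (transitivity (c * (powerRZ (INR n) h * powerRZ (INR n) (- h)));
        [ring | rewrite Hpow; ring]).
  apply bump_orbit_a; try lra.
  rewrite Rabs_mult, Hc, (Rabs_pos_eq (powerRZ _ (- h))) by lra. lra.
Qed.

Lemma bad_orbit_pseudotrajectory : pseudotrajectory a b Phi (3 * kap) bad_orbit.
Proof.
  assert (Phi_ainv : forall v, Phi (ginv a) v = (fst v, snd v + -1 * fst v)).
  { intros v. apply (action_inv_apply G _ Phi act_one act_mul).
    rewrite Phi_a. unfold matA. destruct v; simpl. f_equal; ring. }
  assert (exact_step : forall v w : R * R, v = w -> dist2 v w < 3 * kap).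
  { intros v w <-. unfold dist2. rewrite !Rminus_diag. simpl.
    rewrite Rmult_0_l, Rplus_0_l, sqrt_0. lra. }
  intros s g [-> | [-> | [-> | ->]]].
  - rewrite Phi_a. replace (matA (bad_orbit g))
      with (let v := bad_orbit g in (fst v, snd v + 1 * fst v))
      by (unfold matA; simpl; f_equal; ring).
    apply bad_orbit_shear; [exact f_a | apply Rabs_R1].
  - apply exact_step. apply bad_orbit_b.
  - rewrite Phi_ainv. apply bad_orbit_shear.
    + rewrite (hom_inv _ _ f f_hom), f_a. unfold model_a. cbn [ginv model BSmodel].
      unfold bs_inv. cbn [fst snd]. simpl powerRZ. f_equal. ring.
    + rewrite Rabs_left by lra. ring.
  - apply exact_step. apply (equivariant_inv G _ Phi bad_orbit b act_one act_mul).
    apply bad_orbit_b.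
Qed.

Lemma action_fst_b k x : fst (Phi (gpow b k) x) = lam ^ k * fst x.
Proof.
  induction k as [|k IH]; simpl.
  - rewrite act_one. ring.
  - rewrite act_mul, Phi_b. simpl. rewrite IH. ring.
Qed.

Lemma action_fst_a m x : fst (Phi (gpow a m) x) = fst x.
Proof.
  induction m as [|m IH]; simpl.
  - now rewrite act_one.
  - now rewrite act_mul, Phi_a.
Qed.

(* Along [b^k] the bad orbit has first coordinate [0], while along
   [a^(n^k) b^k] it has first coordinate [kap lam^k]; the action cannot
   separate these two points, whose first coordinates both become
   [lam^k x1]. *)
Lemma bad_orbit_fst_b k : fst (bad_orbit (gpow b k)) = 0.
Proof.
  unfold bad_orbit, bump_orbit. rewrite (hom_pow _ _ f f_hom), f_b. unfold model_b, model.
  rewrite model_pow_b. cbn [fst snd]. unfold ramp. destruct Rle_dec; [ring | lra].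
Qed.

Lemma bad_orbit_fst_ab k : fst (bad_orbit (gmul (gpow a (n ^ k)) (gpow b k))) = kap * lam ^ k.
Proof.
  pose proof (lt_1_INR n n_gt1).
  unfold bad_orbit, bump_orbit. rewrite f_hom, !(hom_pow _ _ f f_hom), f_a, f_b.
  unfold model_a, model_b, model. rewrite model_pow_a, model_pow_b.
  cbn [gmul BSmodel]. unfold bs_mul. cbn [fst snd]. rewrite Z.add_0_l.
  replace (INR (n ^ k) * powerRZ (INR n) (- Z.of_nat k) + 0) with 1.
  - rewrite <- pow_powerRZ. unfold ramp.
    destruct (Rle_dec 1 0); [lra|]. destruct (Rle_dec 1 1); [ring | lra].
  - rewrite powerRZ_neg', <- pow_powerRZ, pow_INR. field. apply pow_nonzero. lra.
Qed.

Lemma bad_orbit_not_shadowed : ~ exists x, forall g, dist2 (bad_orbit g) (Phi g x) < 1.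
Proof.
  intros [x Hx].
  assert (Hbound : forall k, kap * lam ^ k < 2).
  { intros k.
    pose proof (Rle_lt_trans _ _ _ (dist2_fst _ _) (Hx (gpow b k))) as E1.
    pose proof (Rle_lt_trans _ _ _ (dist2_fst _ _) (Hx (gmul (gpow a (n ^ k)) (gpow b k))))
      as E2.
    rewrite bad_orbit_fst_b, action_fst_b in E1.
    rewrite bad_orbit_fst_ab, act_mul, action_fst_a, action_fst_b in E2.
    apply Rabs_def2 in E1. apply Rabs_def2 in E2. lra. }
  destruct (Pow_x_infinity lam ltac:(rewrite Rabs_pos_eq; lra) (2 / kap)) as [N HN].
  specialize (HN N (le_n N)). specialize (Hbound N).
  rewrite Rabs_pos_eq in HN by (apply pow_le; lra).
  apply Rge_le, (Rmult_le_compat_l kap) in HN; [|lra].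
  replace (kap * (2 / kap)) with 2 in HN by (field; lra). lra.
Qed.

End SlowCase.

Lemma no_shadowing_when_slow (n : nat) (lam : R) (G : Group) (a b : G)
  (Phi : G -> R * R -> R * R) :
  (1 < n)%nat -> 1 < lam -> lam <= INR n ->
  is_BS1n G n a b -> is_action G Phi ->
  (forall x, Phi a x = matA x) -> (forall x, Phi b x = matB n lam x) ->
  ~ shadowing a b Phi.
Proof.
  intros Hn Hlam HlamN [_ [_ Huniv]] [_ [Hone Hmul]] HPa HPb Hsh.
  destruct (Huniv (model n Hn) (model_a n Hn) (model_b n Hn) (model_relation n Hn))
    as [f [Hf [Hfa Hfb]]].
  destruct (Hsh 1 Rlt_0_1) as [d [Hd Hshadow]].
  assert (Hkap : 0 < d / 3) by lra.
  apply (bad_orbit_not_shadowed n lam (d / 3) G a b Phi Hn Hlam HlamN Hkap Hone Hmul HPa HPb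
           f Hf Hfa Hfb).
  apply Hshadow. replace d with (3 * (d / 3)) at 1 by field.
  exact (bad_orbit_pseudotrajectory n lam (d / 3) G a b Phi Hn Hlam HlamN Hkap Hone Hmul HPa HPb
           f Hf Hfa Hfb).
Qed.

Theorem theorem2 (n : nat) (lam : R) (G : Group) (a b : G)
  (Phi : G -> R * R -> R * R) :
  (1 < n)%nat -> 1 < lam ->
  is_BS1n G n a b ->
  is_action G Phi ->
  (forall x, Phi a x = matA x) ->
  (forall x, Phi b x = matB n lam x) ->
  (lam <= INR n -> ~ shadowing a b Phi) /\
  (INR n < lam -> shadowing a b Phi).
Proof.
  intros Hn Hlam HBS Hact HPa HPb. split.
  - intros HlamN. exact (no_shadowing_when_slow n lam G a b Phi Hn Hlam HlamN HBS Hact HPa HPb).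
  - intros HnLam. destruct HBS as [Hgen [Hrel _]].
    apply (shadowing_when_expanding n lam G a b Phi); auto. lia.
Qed.
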